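(* For $n\ge 4$ let $R_n$ be the tree obtained from the star $S_{n-1}$ by adding a new vertex adjacent to one leaf of $S_{n-1}$. Then $$av_1(R_n)=\frac{5n-13+(n+1)2^{n-4}}{2n-5+2^{n-3}}=\frac{n+1}{2}-\frac{n^2-\tfrac{13}{2}n+\tfrac{21}{2}}{2n-5+2^{n-3}}=\frac n2+\frac{2^{n-4}-n^2+\tfrac{15}{2}n-13}{2n-5+2^{n-3}}.$$ Consequently $av_1(R_n)<\frac{n+1}{2}$ for all $n\ge4$, $av_1(R_n)>\frac n2$ for all $n\ge 4$ with $n\notin\{6,7,8\}$, and $\lim_{n\to\infty}\big(av_1(R_n)-\frac{n+1}{2}\big)=0$.
   Context: For a graph $G=(V,E)$, a set $S\subseteq V$ is a $1$-nearly independent vertex set if the subgraph induced by $S$ has exactly one edge. $\sigma_1(G)$ is the number of such sets, $S_1(G)$ the sum of their sizes, and $av_1(G)=S_1(G)/\sigma_1(G)$. $S_m$ denotes the star on $m$ vertices. *)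

From HB Require Import structures.
From mathcomp Require Import all_boot all_order all_algebra.
Set Implicit Arguments. Unset Strict Implicit. Unset Printing Implicit Defensive.
Import Order.TTheory GRing.Theory Num.Theory.

(* A simple graph on a finite vertex type T is given by a symmetric,
   irreflexive edge relation e.  The edges of the subgraph induced by S are
   the unordered pairs {x,y} with x,y in S and e x y. *)
Definition induced_edges (T : finType) (e : rel T) (S : {set T}) : {set {set T}} :=
  [set [set x; y] | x in S, y in S & e x y].

Definition nearly_indep1 (T : finType) (e : rel T) (S : {set T}) : bool :=
  #|induced_edges e S| == 1%N.

Definition sigma1 (T : finType) (e : rel T) : nat :=
  #|[set S : {set T} | nearly_indep1 e S]|.

Definition S1 (T : finType) (e : rel T) : nat :=
  \sum_(S : {set T} | nearly_indep1 e S) #|S|.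

Definition av1 (T : finType) (e : rel T) : rat :=
  ((S1 e)%:R / (sigma1 e)%:R)%R.

(* The tree R_n on vertex set {0,...,n-1}: the star S_{n-1} has centre 0 and
   leaves 1,...,n-2; the new vertex n-1 is adjacent to the leaf 1. *)
Definition Redge (n a b : nat) : bool :=
  ((a == 0%N) && (0 < b < n.-1)) || ((a == 1%N) && (b == n.-1)).

Definition Rrel (n : nat) : rel 'I_n :=
  fun i j => Redge n i j || Redge n j i.
Arguments Rrel n : clear implicits.

From HB Require Import structures.
From mathcomp Require Import all_boot all_order all_algebra zify ring lra.
Import Order.TTheory GRing.Theory Num.Theory.
Set Implicit Arguments. Unset Strict Implicit. Unset Printing Implicit Defensive.

(* A vertex set of R_n with exactly one induced edge either avoids the centre
   of the star, and then its edge joins the hub (the leaf carrying the new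
   vertex) to the new vertex while the other n - 3 leaves are arbitrary, or it
   contains the centre and exactly one neighbour of it: the hub alone, or one
   leaf, possibly together with the new vertex.  Hence
   sigma_1(R_n) = 2^(n-3) + 2n - 5 and S_1(R_n) = (n+1) 2^(n-4) + 5n - 13, the
   sizes of the subsets of the leaves being summed by pairing each subset with
   its complement.  The three closed forms are rearrangements of this quotient;
   the inequalities and the limit hold because 2^(n-4) eventually dominates the
   quadratic numerators, which follows from (n-3)^3 <= 2^(n-1). *)

Section FinsetFacts.
Variable T : finType.
Implicit Types (A B L S X : {set T}) (F G : {set {set T}}).

Lemma sum_card_powerset A : 2 * \sum_(X in powerset A) #|X| = #|A| * 2 ^ #|A|.
Proof.
have setDDK X : A :\: (A :\: X) = A :&: X by rewrite setDDr setDv set0U.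
have sum_compl : \sum_(X in powerset A) #|X| = \sum_(X in powerset A) #|A :\: X|.
  rewrite (reindex_onto (setD A) (setD A)) => [|X]; last first.
    by rewrite powersetE setDDK => /setIidPr.
  by apply: eq_bigl => X; rewrite !powersetE subsetDl setDDK /=; apply/eqP/setIidPr.
rewrite mul2n -addnn {1}sum_compl -big_split /=.
rewrite (eq_bigr (fun _ => #|A|)) ?sum_nat_const ?card_powerset 1?mulnC // => X.
by rewrite powersetE => /setIidPr sXA; rewrite -(cardsID X A) sXA addnC.
Qed.

Lemma pair_subset_mem S a b p q :
  a \in S -> b \in S -> [set a; b] = [set p; q] -> (p \in S) && (q \in S).
Proof. by move=> aS bS Eab; rewrite -!sub1set -subUset -Eab subUset !sub1set aS. Qed.

Lemma disjoint_sep_mem F G x :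
  {in F, forall S, x \in S} -> {in G, forall S, x \notin S} -> [disjoint F & G].
Proof.
move=> inF notinG; rewrite disjoint_subset; apply/subsetP=> S /inF xS.
by apply/negP=> /notinG; rewrite xS.
Qed.

Lemma sum_setU_disjoint (I : finType) (A B : {set I}) (f : I -> nat) :
  [disjoint A & B] -> \sum_(i in A :|: B) f i = \sum_(i in A) f i + \sum_(i in B) f i.
Proof. by move=> AB; rewrite -bigU //; apply: eq_bigl => i; rewrite in_setU. Qed.

Lemma setU_set1_inj A L : [disjoint A & L] -> {in L &, injective (fun x => A :|: [set x])}.
Proof.
move=> AL x y xL _ /setP/(_ x).
by rewrite !inE eqxx orbT (disjointFl AL xL) => /esym/eqP.
Qed.

Lemma setIU_disjoint A L X : [disjoint A & L] -> X \subset L -> (A :|: X) :&: L = X.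
Proof. by move=> AL XL; rewrite setIUl (disjoint_setI0 AL) set0U; apply/setIidPl. Qed.

Lemma setU_powerset_inj A L : [disjoint A & L] -> {in powerset L &, injective (setU A)}.
Proof.
move=> AL X Y; rewrite !powersetE => XL YL AXY.
by rewrite -(setIU_disjoint AL XL) AXY setIU_disjoint.
Qed.

Lemma cardsU_disjoint A B : [disjoint A & B] -> #|A :|: B| = #|A| + #|B|.
Proof. by move=> AB; rewrite cardsU (disjoint_setI0 AB) cards0 subn0. Qed.

End FinsetFacts.

Section NearlyIndependent.
Variables (T : finType) (e : rel T).
Implicit Type S : {set T}.

Lemma nearly_indep1P S :
  reflect (exists x y, [/\ x \in S, y \in S, e x y &
             forall a b, a \in S -> b \in S -> e a b -> [set a; b] = [set x; y]])
          (nearly_indep1 e S).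
Proof.
apply: (iffP cards1P) => [[E edgesS]|[x [y [xS yS exy edge_xy]]]].
  have : E \in induced_edges e S by rewrite edgesS set11.
  case/imset2P=> x y xS; rewrite inE => /andP[yS exy] Exy; subst E.
  exists x, y; split=> // a b aS bS eab; apply/set1P; rewrite -edgesS.
  by apply/imset2P; exists a b; rewrite // inE bS.
exists [set x; y]; apply/setP=> E; rewrite inE; apply/imset2P/eqP.
  by case=> a b aS; rewrite inE => /andP[bS eab] ->; apply: edge_xy.
by move=> ->; exists x y; rewrite // inE yS.
Qed.

Lemma nearly_indep1_edge_mem S a b c d :
  nearly_indep1 e S -> a \in S -> b \in S -> c \in S -> d \in S ->
  e a b -> e c d -> b \in [set c; d].
Proof.
case/nearly_indep1P=> x [y [_ _ _ edge_xy]] aS bS cS dS eab ecd.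
by rewrite (edge_xy c d) // -(edge_xy a b) // set22.
Qed.

End NearlyIndependent.

Section TreeR.
Variable k : nat.
Local Notation n := k.+4.
Implicit Types (S X : {set 'I_n}) (l z : 'I_n).

Definition centre : 'I_n := ord0.
Definition hub : 'I_n := Ordinal (isT : 1 < n).
Definition tip : 'I_n := ord_max.
Definition leaves : {set 'I_n} := [set i : 'I_n | 1 < i < k.+3].

Lemma centre_notin_leaves : centre \notin leaves. Proof. by rewrite inE. Qed.
Lemma hub_notin_leaves : hub \notin leaves. Proof. by rewrite inE. Qed.
Lemma tip_notin_leaves : tip \notin leaves. Proof. by rewrite inE /= ltnn. Qed.

Lemma leaf_neq l : l \in leaves -> [/\ l != centre, l != hub & l != tip].
Proof. by rewrite inE -!val_eqE /= => ?; split; lia. Qed.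

Lemma card_leaves : #|leaves| = k.+1.
Proof.
have -> : leaves = ~: [set centre; hub; tip].
  by apply/setP=> i; rewrite !inE -!val_eqE /=; have := ltn_ord i; lia.
by rewrite cardsCs setCK card_ord -setUA !cardsU1 cards1 !inE.
Qed.

Lemma R_vertexP z : [\/ z = centre, z = hub, z = tip | z \in leaves].
Proof.
case: z => -[|[|m]] m_lt; [by constructor 1; apply: val_inj | by constructor 2; apply: val_inj|].
have [m_eq|m_ne] := eqVneq m.+2 k.+3; first by constructor 3; apply: val_inj.
by constructor 4; rewrite inE /=; lia.
Qed.

Lemma Rrel_centre_hub : Rrel n centre hub. Proof. by []. Qed.
Lemma Rrel_hub_tip : Rrel n hub tip. Proof. by rewrite /Rrel /Redge /= eqxx. Qed.
Lemma Rrel_centre_leaf l : l \in leaves -> Rrel n centre l.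
Proof. by rewrite inE /Rrel /Redge /= => /andP[/ltnW -> ->]. Qed.

Lemma Rrel_edges x y : Rrel n x y ->
  [\/ [set x; y] = [set hub; tip], [set x; y] = [set centre; hub]
    | exists2 l, l \in leaves & [set x; y] = [set centre; l]].
Proof.
move=> exy; wlog: x y {exy} / Redge n x y.
  by move=> oriented; case/orP: exy => /oriented //; rewrite [[set y; x]]setUC.
rewrite /Redge /= => /orP[/andP[/eqP x0 /andP[y_gt0 y_lt]]|/andP[/eqP x1 /eqP y_max]].
  have -> : x = centre by apply: val_inj.
  have [y1|y_ne1] := eqVneq (y : nat) 1.
    by constructor 2; congr [set _; _]; apply: val_inj.
  by constructor 3; exists y; rewrite // inE; lia.
by constructor 1; congr [set _; _]; apply: val_inj.
Qed.

Definition hub_tip_sets := [set [set hub; tip] :|: X | X in powerset leaves].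
Definition centre_leaf_sets := [set [set centre; l] | l in leaves].
Definition centre_tip_leaf_sets := [set [set centre; tip; l] | l in leaves].

Lemma centre_notin_hub_tip_set X : X \subset leaves -> centre \notin [set hub; tip] :|: X.
Proof. by move=> XL; apply: contra centre_notin_leaves; rewrite in_setU in_set2 => /orP[/orP[]|/(subsetP XL)]. Qed.

Lemma nearly_indep1_centre_notin S :
  nearly_indep1 (Rrel n) S -> centre \notin S -> S \in hub_tip_sets.
Proof.
case/nearly_indep1P=> x [y [xS yS /Rrel_edges exy _]] cNS.
have [hS tS] : hub \in S /\ tip \in S.
  case: exy => [E|E|[l _ E]]; have /andP[pS qS] := pair_subset_mem xS yS E.
  - by split.
  - by rewrite pS in cNS.
  - by rewrite pS in cNS.
apply/imsetP; exists (S :&: leaves); first by rewrite powersetE subsetIr.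
apply/setP=> z; rewrite in_setU !in_set2 in_setI.
case: (R_vertexP z) => [->|->|->|zL]; rewrite ?eqxx ?orbT //; first by rewrite (negPf cNS).
by have [_ /negPf -> /negPf ->] := leaf_neq zL; rewrite zL andbT.
Qed.

Lemma nearly_indep1_hub_in S :
  nearly_indep1 (Rrel n) S -> centre \in S -> hub \in S -> S = [set centre; hub].
Proof.
move=> indS cS hS; apply/setP=> z; rewrite !inE.
case: (R_vertexP z) => [->|->|->|zL]; rewrite ?eqxx ?orbT //.
  apply/negP=> tS.
  by have := nearly_indep1_edge_mem indS hS tS cS hS Rrel_hub_tip Rrel_centre_hub; rewrite !inE.
have [/negPf -> /negPf -> _] := leaf_neq zL; apply/negP=> zS.
have := nearly_indep1_edge_mem indS cS zS cS hS (Rrel_centre_leaf zL) Rrel_centre_hub.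
by rewrite !inE; have [/negPf -> /negPf -> _] := leaf_neq zL.
Qed.

Lemma nearly_indep1_hub_notin S :
  nearly_indep1 (Rrel n) S -> centre \in S -> hub \notin S ->
  S \in centre_leaf_sets :|: centre_tip_leaf_sets.
Proof.
move=> indS cS hNS.
have [l lL lS] : exists2 l, l \in leaves & l \in S.
  case/nearly_indep1P: indS => x [y [xS yS /Rrel_edges exy _]].
  case: exy => [E|E|[l lL E]]; have /andP[pS qS] := pair_subset_mem xS yS E.
  - by rewrite pS in hNS.
  - by rewrite qS in hNS.
  - by exists l.
have leafS z : z \in leaves -> (z \in S) = (z == l).
  move=> zL; apply/idP/eqP => [zS|->//].
  have := nearly_indep1_edge_mem indS cS zS cS lS (Rrel_centre_leaf zL) (Rrel_centre_leaf lL).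
  by rewrite !inE; have [/negPf -> _ _] := leaf_neq zL => /eqP.
have [_ lNh lNt] := leaf_neq lL.
have S_off_tip z : z != tip -> (z \in S) = (z \in [set centre; l]).
  rewrite !inE; case: (R_vertexP z) => [->|->|->|zL]; rewrite ?eqxx //.
    by rewrite (negPf hNS) [hub == l]eq_sym (negPf lNh).
  by have [/negPf -> _ _] := leaf_neq zL; rewrite leafS.
rewrite in_setU; apply/orP; case tS: (tip \in S); [right|left]; apply/imsetP; exists l => //.
  apply/setP=> z; have [->|zNt] := eqVneq z tip; first by rewrite tS !inE eqxx orbT.
  by rewrite S_off_tip // !inE (negPf zNt) orbF.
apply/setP=> z; have [->|zNt] := eqVneq z tip; last exact: S_off_tip.
by rewrite tS !inE [tip == l]eq_sym (negPf lNt).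
Qed.

Lemma nearly_indep1_hub_tip X :
  X \subset leaves -> nearly_indep1 (Rrel n) ([set hub; tip] :|: X).
Proof.
move=> XL; apply/nearly_indep1P; exists hub, tip.
split; rewrite ?inE ?eqxx ?orbT ?Rrel_hub_tip //.
have cN := centre_notin_hub_tip_set XL.
move=> a b aS bS /Rrel_edges[//|E|[l _ E]]; have /andP[cS _] := pair_subset_mem aS bS E.
all: by rewrite cS in cN.
Qed.

Lemma nearly_indep1_centre_hub : nearly_indep1 (Rrel n) [set centre; hub].
Proof.
apply/nearly_indep1P; exists centre, hub; split; rewrite ?set21 ?set22 //.
move=> a b aS bS /Rrel_edges[E|//|[l lL E]]; have /andP[_ qS] := pair_subset_mem aS bS E.
  by rewrite !inE in qS.
by have [lNc lNh _] := leaf_neq lL; rewrite !inE (negPf lNc) (negPf lNh) in qS.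
Qed.

Lemma nearly_indep1_centre_leaf l :
  l \in leaves -> nearly_indep1 (Rrel n) [set centre; l].
Proof.
move=> lL; have [lNc lNh lNt] := leaf_neq lL.
apply/nearly_indep1P; exists centre, l; split; rewrite ?set21 ?set22 ?Rrel_centre_leaf //.
move=> a b aS bS /Rrel_edges[E|E|[l' l'L E]]; have /andP[pS qS] := pair_subset_mem aS bS E.
- by rewrite !inE [hub == l]eq_sym (negPf lNh) in pS.
- by rewrite !inE [hub == l]eq_sym (negPf lNh) in qS.
- have [/negPf l'Nc _ _] := leaf_neq l'L.
  by move: qS; rewrite E !inE l'Nc => /eqP ->.
Qed.

Lemma nearly_indep1_centre_tip_leaf l :
  l \in leaves -> nearly_indep1 (Rrel n) [set centre; tip; l].
Proof.
move=> lL; have [lNc lNh lNt] := leaf_neq lL.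
apply/nearly_indep1P; exists centre, l; split; rewrite ?inE ?eqxx ?orbT ?Rrel_centre_leaf //.
move=> a b aS bS /Rrel_edges[E|E|[l' l'L E]]; have /andP[pS qS] := pair_subset_mem aS bS E.
- by rewrite !inE [hub == l]eq_sym (negPf lNh) in pS.
- by rewrite !inE [hub == l]eq_sym (negPf lNh) in qS.
- have [/negPf l'Nc _ /negPf l'Nt] := leaf_neq l'L.
  by move: qS; rewrite E !inE l'Nc l'Nt => /eqP ->.
Qed.

Definition R_nearly_indep1_sets :=
  (hub_tip_sets :|: [set [set centre; hub]]) :|: (centre_leaf_sets :|: centre_tip_leaf_sets).

Lemma nearly_indep1_RE S : nearly_indep1 (Rrel n) S = (S \in R_nearly_indep1_sets).
Proof.
apply/idP/idP=> [indS|].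
  rewrite !in_setU in_set1.
  have [cS|cNS] := boolP (centre \in S); last by rewrite nearly_indep1_centre_notin.
  have [hS|hNS] := boolP (hub \in S).
    by rewrite (nearly_indep1_hub_in indS) ?eqxx ?orbT.
  by rewrite -in_setU nearly_indep1_hub_notin ?orbT.
rewrite !in_setU in_set1 => /orP[/orP[/imsetP[X]|/eqP->]|/orP[]/imsetP[l lL ->]].
- by rewrite powersetE => XL ->; apply: nearly_indep1_hub_tip.
- exact: nearly_indep1_centre_hub.
- exact: nearly_indep1_centre_leaf.
- exact: nearly_indep1_centre_tip_leaf.
Qed.

Lemma hub_tip_disjoint_leaves : [disjoint [set hub; tip] & leaves].
Proof. by rewrite disjoints_subset subUset !sub1set !in_setC hub_notin_leaves tip_notin_leaves. Qed.

Lemma sum_nearly_indep1_R (F : {set 'I_n} -> nat) :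
  \sum_(S | nearly_indep1 (Rrel n) S) F S =
    (\sum_(X in powerset leaves) F ([set hub; tip] :|: X) + F [set centre; hub])
    + (\sum_(l in leaves) F [set centre; l] + \sum_(l in leaves) F [set centre; tip; l]).
Proof.
rewrite (eq_bigl _ _ nearly_indep1_RE) !sum_setU_disjoint.
- rewrite big_set1 !big_imset //; last exact: setU_powerset_inj hub_tip_disjoint_leaves.
    apply: setU_set1_inj.
    by rewrite disjoints_subset subUset !sub1set !in_setC centre_notin_leaves tip_notin_leaves.
  by apply: setU_set1_inj; rewrite disjoints1 centre_notin_leaves.
- rewrite disjoint_sym; apply: (disjoint_sep_mem (x := tip)) => S /imsetP[l lL ->].
    by rewrite !inE eqxx orbT.
  by have [_ _ lNt] := leaf_neq lL; rewrite !inE negb_or [tip == l]eq_sym lNt.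
- rewrite disjoint_sym; apply: (disjoint_sep_mem (x := centre)) => S.
    by move/set1P->; rewrite set21.
  by case/imsetP=> X; rewrite powersetE => /centre_notin_hub_tip_set cN ->.
apply: (disjoint_sep_mem (x := hub)) => S; rewrite in_setU.
  by case/orP=> [/imsetP[X _ ->]|/set1P->]; rewrite !inE eqxx ?orbT.
by case/orP=> /imsetP[l lL ->]; have [_ lNh _] := leaf_neq lL; rewrite !inE negb_or [hub == l]eq_sym lNh.
Qed.

Lemma sigma1_R : sigma1 (Rrel n) = 2 ^ k.+1 + 2 * k + 3.
Proof.
rewrite /sigma1 -sum1_card (eq_bigl _ _ (fun S => in_set _ S)) sum_nearly_indep1_R.
by rewrite !sum_nat_const card_powerset card_leaves !muln1; lia.
Qed.

Lemma S1_R : S1 (Rrel n) = (k + 5) * 2 ^ k + 5 * k + 7.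
Proof.
rewrite /S1 sum_nearly_indep1_R.
have card_ht X : X \in powerset leaves -> #|[set hub; tip] :|: X| = 2 + #|X|.
  by rewrite powersetE => XL; rewrite cardsU_disjoint ?cards2 // (disjointWr XL hub_tip_disjoint_leaves).
have card_cl l : l \in leaves -> #|[set centre; l]| = 2.
  by move=> lL; have [lNc _ _] := leaf_neq lL; rewrite cards2 eq_sym lNc.
have card_ctl l : l \in leaves -> #|[set centre; tip; l]| = 3.
  move=> lL; have [lNc _ lNt] := leaf_neq lL.
  by rewrite -setUA !cardsU1 cards1 !inE ![_ == l]eq_sym (negPf lNc) (negPf lNt).
rewrite (eq_bigr _ card_ht) (eq_bigr _ card_cl) (eq_bigr _ card_ctl) big_split /=.
have := sum_card_powerset leaves.
rewrite !sum_nat_const card_powerset card_leaves cards2 expnS.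
move: (\sum_(X in _) _) (2 ^ k) => s p /=; nia.
Qed.

End TreeR.

Lemma cube_le_exp2 k : (k.+1 ^ 3 <= 2 ^ k.+3)%N.
Proof.
elim: k => [|k IH] //; have [k_le2|k_gt2] := leqP k 2.
  by case: k k_le2 {IH} => [|[|[|]]].
rewrite expnS; apply: leq_trans (leq_mul (leqnn 2) IH); nia.
Qed.

Lemma quadratic_lt_exp2 k : k \notin [:: 2; 3; 4]%N -> (2 * k ^ 2 + k < 2 * 2 ^ k + 2)%N.
Proof.
move=> k_ok; have [k_le4|k_gt4] := leqP k 4.
  by case: k k_le4 k_ok => [|[|[|[|[|]]]]].
have := cube_le_exp2 k; rewrite !expnS; nia.
Qed.

Local Open Scope ring_scope.

Lemma natr_succ4 (R : pzSemiRingType) k : k.+4%:R = k%:R + 4 :> R.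
Proof. by rewrite -addn4 natrD. Qed.

Lemma av1_R k : av1 (Rrel k.+4) =
  ((k%:R + 5) * 2 ^+ k + 5 * k%:R + 7) / (2 * 2 ^+ k + 2 * k%:R + 3) :> rat.
Proof.
by rewrite /av1 S1_R sigma1_R expnS !(natrD, natrM, natrX); congr (_ / _); ring.
Qed.

Lemma av1_R_closed_forms n : (4 <= n)%N ->
     av1 (Rrel n)
       = (5 * n%:R - 13 + (n%:R + 1) * 2 ^+ (n - 4)) / (2 * n%:R - 5 + 2 ^+ (n - 3))
  /\ av1 (Rrel n)
       = (n%:R + 1) / 2 - (n%:R ^+ 2 - 13 / 2 * n%:R + 21 / 2) / (2 * n%:R - 5 + 2 ^+ (n - 3))
  /\ av1 (Rrel n)
       = n%:R / 2 + (2 ^+ (n - 4) - n%:R ^+ 2 + 15 / 2 * n%:R - 13) / (2 * n%:R - 5 + 2 ^+ (n - 3)).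
Proof.
case: n => [|[|[|[|k]]]] // _.
rewrite av1_R !subSS !subn0 [2 ^+ k.+1]exprS (natr_succ4 _ k).
have p_gt0 : 0 < 2 ^+ k :> rat by rewrite exprn_gt0.
have x_ge0 : 0 <= k%:R :> rat by [].
by split; [|split]; field; apply/eqP; lra.
Qed.

Lemma av1_R_denom_gt0 n : (4 <= n)%N -> 0 < 2 * n%:R - 5 + 2 ^+ (n - 3) :> rat.
Proof.
move=> n_ge4; have n4 : 4 <= n%:R :> rat by rewrite (ler_nat _ 4).
by have := exprn_gt0 (n - 3) (ltr0Sn rat 1); lra.
Qed.

Lemma av1_R_deficit_numer_gt0 n : (4 <= n)%N -> 0 < n%:R ^+ 2 - 13 / 2 * n%:R + 21 / 2 :> rat.
Proof.
move=> n_ge4; have n_ge4r : 4 <= n%:R :> rat by rewrite (ler_nat _ 4).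
nra.
Qed.

Lemma av1_R_lt_half_succ n : (4 <= n)%N -> av1 (Rrel n) < (n%:R + 1) / 2.
Proof.
move=> n_ge4; have [_ [-> _]] := av1_R_closed_forms n_ge4.
by rewrite gtrBl; apply: divr_gt0; [exact: av1_R_deficit_numer_gt0 | exact: av1_R_denom_gt0].
Qed.

Lemma av1_R_gt_half n : (4 <= n)%N -> n \notin [:: 6; 7; 8]%N -> n%:R / 2 < av1 (Rrel n).
Proof.
move=> n_ge4 n_ok; have [_ [_ ->]] := av1_R_closed_forms n_ge4.
rewrite ltrDl; apply: divr_gt0; last exact: av1_R_denom_gt0.
case: n n_ge4 n_ok => [|[|[|[|k]]]] // _ n_ok.
have k_ok : k \notin [:: 2; 3; 4]%N by move: n_ok; rewrite !inE !eqSS.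
rewrite !subSS !subn0 (natr_succ4 _ k).
by have := quadratic_lt_exp2 k_ok; rewrite -(ltr_nat rat) !(natrD, natrM, natrX); lra.
Qed.

Lemma av1_R_dist_lt n : (4 <= n)%N ->
  `|av1 (Rrel n) - (n%:R + 1) / 2| < 4 / (n - 3)%:R.
Proof.
move=> n_ge4; have [_ [-> _]] := av1_R_closed_forms n_ge4.
have D_gt0 := av1_R_denom_gt0 n_ge4.
rewrite addrAC subrr add0r normrN ger0_norm; last first.
  by apply/ltW/divr_gt0; [exact: av1_R_deficit_numer_gt0 | exact: av1_R_denom_gt0].
have [k n_eq] : exists k, n = k.+4 by exists (n - 4)%N; lia.
rewrite n_eq !subSS !subn0 (natr_succ4 _ k) in D_gt0 *.
rewrite ltr_pdivlMr ?ltr0Sn // mulrAC ltr_pdivrMr //.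
have := cube_le_exp2 k; rewrite -(ler_nat rat) !natrX -[k.+1%:R]natr1 !exprS !expr0.
have : 0 <= k%:R :> rat by [].
nra.
Qed.

Lemma av1_R_limit eps : 0 < eps -> exists N, forall n, (N <= n)%N ->
  `|av1 (Rrel n) - (n%:R + 1) / 2| < eps.
Proof.
move=> eps_gt0; exists (Num.bound (4 / eps)).+4 => n n_ge.
have n_ge4 : (4 <= n)%N by lia.
apply: lt_le_trans (av1_R_dist_lt n_ge4) _.
rewrite ler_pdivrMr ?ltr0n ?subn_gt0 // mulrC -ler_pdivrMr //.
have bound_gt := archi_boundP (divr_ge0 (ler0n rat 4) (ltW eps_gt0)).
apply: le_trans (ltW bound_gt) _; rewrite ler_nat.
by rewrite leq_subRL ?add3n 1?ltnW.
Qed.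

Theorem mainTheorem12 :
  (forall n : nat, (4 <= n)%N ->
     av1 (Rrel n)
       = (5 * n%:R - 13 + (n%:R + 1) * 2 ^+ (n - 4)) / (2 * n%:R - 5 + 2 ^+ (n - 3))
     /\ av1 (Rrel n)
       = (n%:R + 1) / 2 - (n%:R ^+ 2 - 13 / 2 * n%:R + 21 / 2) / (2 * n%:R - 5 + 2 ^+ (n - 3))
     /\ av1 (Rrel n)
       = n%:R / 2 + (2 ^+ (n - 4) - n%:R ^+ 2 + 15 / 2 * n%:R - 13) / (2 * n%:R - 5 + 2 ^+ (n - 3))) /\
  (forall n : nat, (4 <= n)%N -> av1 (Rrel n) < (n%:R + 1) / 2) /\
  (forall n : nat, (4 <= n)%N -> n \notin [:: 6; 7; 8]%N -> n%:R / 2 < av1 (Rrel n)) /\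
  (forall eps : rat, 0 < eps -> exists N : nat, forall n : nat, (N <= n)%N ->
     `|av1 (Rrel n) - (n%:R + 1) / 2| < eps).
Proof.
split; first exact: av1_R_closed_forms.
split; first exact: av1_R_lt_half_succ.
split; first exact: av1_R_gt_half.
exact: av1_R_limit.
Qed.
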